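(* Every weakly-reversible chemical reaction network that is not catalytic is persistent.
   Context: A chemical reaction network (CRN) consists of positive integers $s,n$, a finite directed graph $G$ with vertex set $\{1,\dots,n\}$ and edge set $E(G)$, and an injective labeling of vertex $i$ by a monic monomial $\psi_i(x)=\prod_{j=1}^s x_j^{y_{ij}}$; let $Y=(y_{ij})$ be the $n\times s$ exponent matrix and $\psi(x)=(\psi_1(x),\dots,\psi_n(x))$. $G$ is weakly-reversible iff each connected component is strongly connected. A mass action system is a CRN with a weight function $k:E(G)\to\mathbb{R}_{>0}$; its dynamics are $\frac{dx}{dt}=\psi(x)\,A_k\,Y$, where $A_k$ is the $n\times n$ matrix with $(i,j)$ entry $k(i,j)$ for $(i,j)\in E(G)$, $i\ne j$, $0$ for other off-diagonal entries, and diagonal chosen so that all row sums are zero. The omega-limit set of $x:\mathbb{R}_{\ge0}\to\mathbb{R}^s$ is the set of $y\in\mathbb{R}^s$ for which there is an increasing sequence $t_m\to\infty$ with $x(t_m)\to y$. The CRN is persistent iff for every $k:E(G)\to\mathbb{R}_{>0}$ and every solution $x:\mathbb{R}_{\ge0}\to\mathbb{R}^s_{>0}$ of the associated dynamics, the omega-limit set of $x$ does not meet the boundary $\partial\mathbb{R}^s_{\ge0}$. The event-graph $\overline{G}$ has as vertices all monic monomials in $x_1,\dots,x_s$, with an edge $(N\psi_i,N\psi_j)$ for each $(i,j)\in E(G)$ and each monic monomial $N$. A weakly-reversible CRN is catalytic iff there exist monic monomials $M,N$ path-connected in $\overline{G}$ such that $M/\gcd(M,N)$ and $N/\gcd(M,N)$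 are not path-connected in $\overline{G}$. *)

From HB Require Import structures.
From mathcomp Require Import all_boot all_order all_algebra.
From mathcomp Require Import all_classical all_reals all_analysis.
From mathcomp Require Import Rstruct Rstruct_topology.
From Stdlib Require Import Relations.

Set Implicit Arguments.
Unset Strict Implicit.
Unset Printing Implicit Defensive.

Import Order.TTheory GRing.Theory Num.Theory numFieldNormedType.Exports.
Local Open Scope classical_set_scope.
Local Open Scope ring_scope.
Notation R := Rdefinitions.R.

(* A CRN on s species and n vertices is given by:
   - a directed graph  E : rel 'I_n  on the vertex set {0,..,n-1},
   - the exponent vectors  Y i : {ffun 'I_s -> nat}  (row i of the matrix Y),
     i.e. vertex i is labelled by the monic monomial  psi_i(x) = prod_l x_l^(Y i l).
   Monic monomials in x_1..x_s are identified with their exponent vectors. *)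
Definition monomial (s : nat) := {ffun 'I_s -> nat}.

Definition weakly_reversible (n : nat) (E : rel 'I_n) : Prop :=
  forall i j : 'I_n, connect [rel a b | E a b || E b a] i j -> connect E i j.

Definition psi (s n : nat) (Y : 'I_n -> monomial s) (x : 'I_s -> R) (i : 'I_n) : R :=
  \prod_(l < s) x l ^+ Y i l.

Definition offdiag (n : nat) (E : rel 'I_n) (k : 'I_n -> 'I_n -> R) (i j : 'I_n) : R :=
  if E i j then k i j else 0.

Definition Ak (n : nat) (E : rel 'I_n) (k : 'I_n -> 'I_n -> R) : 'M[R]_n :=
  \matrix_(i, j) (if i == j then - \sum_(j' < n | j' != i) offdiag E k i j'
                  else offdiag E k i j).

Definition Ymx (s n : nat) (Y : 'I_n -> monomial s) : 'M[R]_(n, s) :=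
  \matrix_(i, l) (Y i l)%:R.

Definition mass_action_rhs (s n : nat) (E : rel 'I_n) (Y : 'I_n -> monomial s)
  (k : 'I_n -> 'I_n -> R) (x : 'I_s -> R) : 'rV[R]_s :=
  (\row_i psi Y x i) *m Ak E k *m Ymx Y.

(* x solves dx/dt = psi(x) A_k Y (for all t > 0; behaviour at the single
   time t = 0 does not affect the omega-limit set). *)
Definition is_solution (s n : nat) (E : rel 'I_n) (Y : 'I_n -> monomial s)
  (k : 'I_n -> 'I_n -> R) (x : R -> 'I_s -> R) : Prop :=
  forall t : R, 0 < t -> forall l : 'I_s,
    is_derive (t : R^o) (1 : R^o) (fun u : R^o => x u l : R^o) (mass_action_rhs E Y k (x t) 0 l).

Definition omega_limit (s : nat) (x : R -> 'I_s -> R) (y : 'I_s -> R) : Prop :=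
  exists tm : nat -> R,
    (forall m, tm m < tm m.+1) /\
    (tm m @[m --> \oo] --> +oo) /\
    (forall l : 'I_s, (x (tm m) l) @[m --> \oo] --> y l).

Definition boundary_orthant (s : nat) (y : 'I_s -> R) : Prop :=
  (forall l, 0 <= y l) /\ (exists l, y l = 0).

Definition persistent (s n : nat) (E : rel 'I_n) (Y : 'I_n -> monomial s) : Prop :=
  forall k : 'I_n -> 'I_n -> R, (forall i j, E i j -> 0 < k i j) ->
  forall x : R -> 'I_s -> R,
    is_solution E Y k x ->
    (forall t : R, 0 <= t -> forall l, 0 < x t l) ->
    ~ (exists y, omega_limit x y /\ boundary_orthant y).

Definition event_edge (s n : nat) (E : rel 'I_n) (Y : 'I_n -> monomial s)
  (u v : monomial s) : Prop :=
  exists (i j : 'I_n) (N : monomial s),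
    E i j /\ u = [ffun l => (N l + Y i l)%N] /\ v = [ffun l => (N l + Y j l)%N].

Definition event_connected (s n : nat) (E : rel 'I_n) (Y : 'I_n -> monomial s) :
  monomial s -> monomial s -> Prop :=
  clos_refl_trans (monomial s) (event_edge E Y).

Definition mono_gcd (s : nat) (M N : monomial s) : monomial s :=
  [ffun l => minn (M l) (N l)].

(* M / D for a monomial D dividing M *)
Definition mono_div (s : nat) (M D : monomial s) : monomial s :=
  [ffun l => (M l - D l)%N].

Definition catalytic (s n : nat) (E : rel 'I_n) (Y : 'I_n -> monomial s) : Prop :=
  exists M N : monomial s,
    event_connected E Y M N /\
    ~ event_connected E Y (mono_div M (mono_gcd M N)) (mono_div N (mono_gcd M N)).

(* Let y be an omega-limit point on the boundary and Z = {l | y_l = 0}.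
   First, Z is a siphon: a reaction i -> j whose source monomial psi_i does not
   vanish at y cannot produce a species of Z, since near y that species would be
   produced at a rate bounded away from zero, which is incompatible with the
   solution coming back arbitrarily close to y.  Second, every conservation law
   is constant along the solution, so x(1) - y lies in the span of the reaction
   vectors Y_j - Y_i; as x(1) > 0 = y on Z, some real, hence (after scaling and
   rounding) some integer, combination of reaction vectors is positive on Z.
   By weak reversibility such a combination is a difference N - M of
   event-connected monomials.  Cancelling gcd(M, N) leaves M' vanishing on Z
   and N' positive on Z; non-catalysis connects M' to N', which the siphon
   property forbids. *)

From mathcomp Require Import all_boot all_order all_algebra.
From mathcomp Require Import all_classical all_reals all_analysis.
From mathcomp Require Import Rstruct Rstruct_topology.
From mathcomp Require Import ring lra.
From Stdlib Require Import Relations Classical.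

Set Implicit Arguments.
Unset Strict Implicit.
Unset Printing Implicit Defensive.

Import Order.TTheory GRing.Theory Num.Theory numFieldNormedType.Exports.
Local Open Scope classical_set_scope.
Local Open Scope ring_scope.

Section MassActionRhs.
Variables (s n : nat) (E : rel 'I_n) (Y : 'I_n -> monomial s).
Variable k : 'I_n -> 'I_n -> R.

Definition edge_rate (i j : 'I_n) : R := if i == j then 0 else offdiag E k i j.

Lemma edge_rate_eq0 i j : ~~ E i j -> edge_rate i j = 0.
Proof. by move=> nEij; rewrite /edge_rate /offdiag (negbTE nEij) if_same. Qed.

Lemma edge_rate_ge0 i j : (forall i j, E i j -> 0 < k i j) -> 0 <= edge_rate i j.
Proof.
move=> hk; rewrite /edge_rate /offdiag.
by case: ifP => // _; case: ifP => // /hk /ltW.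
Qed.

Lemma mulmx_AkY (w : 'rV[R]_n) l : (w *m Ak E k *m Ymx Y) 0 l =
  \sum_i \sum_j w 0 i * edge_rate i j * ((Y j l)%:R - (Y i l)%:R).
Proof.
have sum_rate i (f : 'I_n -> R) :
    \sum_j edge_rate i j * f j = \sum_(j < n | j != i) offdiag E k i j * f j.
  rewrite (bigD1 i) //= /edge_rate eqxx mul0r add0r.
  by apply: eq_bigr => j ji; rewrite eq_sym (negbTE ji).
rewrite mxE; under eq_bigr do rewrite !mxE mulr_suml.
rewrite exchange_big /=; apply: eq_bigr => i _.
under eq_bigr do rewrite mxE -mulrA.
under [RHS]eq_bigr do rewrite -mulrA.
rewrite -!mulr_sumr; congr (_ * _).
rewrite sum_rate (bigD1 i) //= eqxx.
under [in RHS]eq_bigr do rewrite mulrBr.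
rewrite sumrB -mulr_suml mulNr addrC; congr (_ - _).
by apply: eq_bigr => j ji; rewrite eq_sym (negbTE ji).
Qed.

Lemma mass_action_rhsE z l : mass_action_rhs E Y k z 0 l =
  \sum_i \sum_j psi Y z i * edge_rate i j * ((Y j l)%:R - (Y i l)%:R).
Proof.
by rewrite /mass_action_rhs mulmx_AkY; under eq_bigr do under eq_bigr do rewrite mxE.
Qed.

End MassActionRhs.

Section EventGraph.
Variables (s n : nat) (E : rel 'I_n) (Y : 'I_n -> monomial s).

Definition mono_add (A B : monomial s) : monomial s := [ffun l => (A l + B l)%N].

Lemma mono_addC : commutative mono_add.
Proof. by move=> A B; apply/ffunP => l; rewrite !ffunE addnC. Qed.

Lemma event_edge_add A B C :
  event_edge E Y A B -> event_edge E Y (mono_add A C) (mono_add B C).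
Proof.
move=> [i [j [N [Eij [-> ->]]]]]; exists i, j, (mono_add N C); split=> //.
by split; apply/ffunP => l; rewrite !ffunE addnAC.
Qed.

Lemma event_connected_add A B C : event_connected E Y A B ->
  event_connected E Y (mono_add A C) (mono_add B C).
Proof.
elim=> [A' B' /event_edge_add|A'|A' B' C' _ h1 _ h2].
- by move=> h; apply: rt_step.
- exact: rt_refl.
- exact: rt_trans h1 h2.
Qed.

Lemma event_edge_complexes i j : E i j -> event_edge E Y (Y i) (Y j).
Proof.
by move=> Eij; exists i, j, [ffun=> 0%N]; do !split=> //; apply/ffunP => l; rewrite !ffunE.
Qed.

Lemma event_connected_complexes i j : connect E i j -> event_connected E Y (Y i) (Y j).
Proof.
move=> /connectP [p]; elim: p i => [|c p IH] i /=; first by move=> _ ->; apply: rt_refl.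
move=> /andP[Eic pc] lc; apply: rt_trans (IH c pc lc).
exact/rt_step/event_edge_complexes.
Qed.

Definition event_difference (v : 'I_s -> int) : Prop :=
  exists P Q : monomial s, event_connected E Y P Q /\ forall l, (Q l)%:Z - (P l)%:Z = v l.

Lemma event_difference_ext v w :
  v =1 w -> event_difference v -> event_difference w.
Proof. by move=> vw [P [Q [PQ hv]]]; exists P, Q; split=> // l; rewrite hv vw. Qed.

Lemma event_difference0 : event_difference (fun=> 0).
Proof. by exists [ffun=> 0%N], [ffun=> 0%N]; split=> [|l]; [apply: rt_refl|rewrite subrr]. Qed.

Lemma event_differenceD v w : event_difference v -> event_difference w ->
  event_difference (fun l => v l + w l).
Proof.
move=> [P [Q [PQ hv]]] [P' [Q' [PQ' hw]]].
exists (mono_add P P'), (mono_add Q Q'); split.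
  apply: rt_trans (event_connected_add P' PQ) _.
  by rewrite (mono_addC Q P') (mono_addC Q Q'); apply: event_connected_add.
by move=> l; rewrite !ffunE -hv -hw !PoszD opprD addrACA.
Qed.

Lemma event_difference_sum (I : Type) (r : seq I) (f : I -> 'I_s -> int) :
  (forall i, event_difference (f i)) ->
  event_difference (fun l => \sum_(i <- r) f i l).
Proof.
move=> hf; elim: r => [|i r IH].
  by apply: event_difference_ext event_difference0 => l; rewrite big_nil.
by apply: event_difference_ext (event_differenceD (hf i) IH) => l; rewrite big_cons.
Qed.

Lemma event_differenceMn v m : event_difference v -> event_difference (fun l => v l *+ m).
Proof.
move=> hv; apply: event_difference_ext (event_difference_sum (index_iota 0 m) (fun=> hv)).
by move=> l; rewrite sumr_const_nat subn0.
Qed.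

(* Weak reversibility is what makes the reaction vector of an edge available
   with negative multiplicities as well. *)
Lemma event_difference_edge i j (z : int) : weakly_reversible E -> E i j ->
  event_difference (fun l => z * ((Y j l)%:Z - (Y i l)%:Z)).
Proof.
move=> WR Eij.
have fwd : event_difference (fun l => (Y j l)%:Z - (Y i l)%:Z).
  by exists (Y i), (Y j); split=> //; exact/rt_step/event_edge_complexes.
have bwd : event_difference (fun l => (Y i l)%:Z - (Y j l)%:Z).
  exists (Y j), (Y i); split=> //; apply/event_connected_complexes/WR.
  by apply: connect1; rewrite /= Eij orbT.
case: z => m.
  by apply: event_difference_ext (event_differenceMn m fwd) => l; rewrite -mulr_natl natz.
apply: event_difference_ext (event_differenceMn m.+1 bwd) => l.
by rewrite NegzE -mulr_natl natz mulNr -mulrN opprB.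
Qed.

Lemma event_difference_edge_combination (z : 'I_n * 'I_n -> int) :
  weakly_reversible E -> (forall p, z p != 0 -> E p.1 p.2) ->
  event_difference (fun l => \sum_p z p * ((Y p.2 l)%:Z - (Y p.1 l)%:Z)).
Proof.
move=> WR zE; apply: event_difference_sum => p.
have [->|/zE Ep] := eqVneq (z p) 0; last exact: event_difference_edge.
by apply: event_difference_ext event_difference0 => l; rewrite mul0r.
Qed.

Definition vanish_on (Z : 'I_s -> Prop) (A : monomial s) : Prop :=
  forall m, Z m -> A m = 0%N.

Definition siphon (Z : 'I_s -> Prop) : Prop :=
  forall i j, E i j -> vanish_on Z (Y i) -> vanish_on Z (Y j).

Lemma siphon_event_connected Z A B : siphon Z ->
  event_connected E Y A B -> vanish_on Z A -> vanish_on Z B.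
Proof.
move=> sZ; elim=> [A' B' h|//|A' B' C' _ h1 _ h2]; last by move/h1/h2.
move: h => [i [j [N [Eij [-> ->]]]]] hA m Zm.
have {}hA m' : Z m' -> N m' = 0%N /\ Y i m' = 0%N.
  by move=> /hA /eqP; rewrite ffunE addn_eq0 => /andP[/eqP ? /eqP].
by rewrite ffunE (hA m Zm).1 (sZ i j Eij (fun m' Zm' => (hA m' Zm').2) m Zm).
Qed.

(* Cancelling [gcd P Q] from [P] and [Q] leaves [P'] vanishing on [Z] and [Q']
   positive on [Z]; non-catalysis connects [P'] to [Q'], which the siphon forbids. *)
Lemma noncatalytic_siphon_difference Z (l0 : 'I_s) v : ~ catalytic E Y -> siphon Z ->
  Z l0 -> event_difference v -> ~ (forall l, Z l -> 0 < v l).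
Proof.
move=> ncat sZ Zl0 [P [Q [PQ hv]]] vpos; apply: ncat; exists P, Q; split=> // PQ'.
have ltPQ l : Z l -> (P l < Q l)%N by move/vpos; rewrite -hv subr_gt0 ltz_nat.
have P'0 : vanish_on Z (mono_div P (mono_gcd P Q)).
  by move=> m Zm; rewrite !ffunE (minn_idPl (ltnW (ltPQ m Zm))) subnn.
move: (siphon_event_connected sZ PQ' P'0 Zl0) => /eqP.
by rewrite !ffunE (minn_idPl (ltnW (ltPQ l0 Zl0))) subn_eq0 leqNgt ltPQ.
Qed.

End EventGraph.

Lemma floor_mul_ge (c d : R) : c * d - `|d| <= (Num.floor c)%:~R * d.
Proof.
have := floor_le c; have := floorD1_gt c; rewrite intrD.
set f := (Num.floor c)%:~R => h1 h2.
by have [d0|d0] := leP 0 d; [rewrite ger0_norm //|rewrite ltr0_norm //]; nra.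
Qed.

(* Scale the real coefficients by a large [K] and round down: the rounding error
   of each term is at most [|d i l|]. *)
Lemma positive_int_combination (I L : finType) (Z : L -> Prop)
    (a : I -> R) (d : I -> L -> int) :
  (forall l, Z l -> 0 < \sum_i a i * (d i l)%:~R) ->
  exists z : I -> int, (forall i, a i = 0 -> z i = 0) /\
    forall l, Z l -> 0 < \sum_i z i * d i l.
Proof.
move=> hpos; pose p l := \sum_i a i * (d i l)%:~R.
pose B := \sum_l \sum_i `|(d i l)%:~R : R|.
pose K := \sum_l (if 0 < p l then (B + 1) / p l else 0).
have B_ge0 : 0 <= B by do 2 apply: sumr_ge0 => ? _.
exists (fun i => Num.floor (K * a i)); split=> [i ->|l Zl]; first by rewrite mulr0 floor0.
have pl := hpos l Zl; rewrite -(ltr0z R) rmorph_sum /=.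
have KpB : B + 1 <= K * p l.
  rewrite mulrC -ler_pdivrMl // mulrC /K (bigD1 l) //= -/(p l) pl lerDl.
  by apply: sumr_ge0 => m _; case: ifP => // pm; apply: divr_ge0 => //; [lra|exact: ltW].
have dB : \sum_i `|(d i l)%:~R : R| <= B.
  rewrite /B (bigD1 l) //= lerDl; apply: sumr_ge0 => m _.
  by apply: sumr_ge0.
apply: (@lt_le_trans _ _ (K * p l - \sum_i `|(d i l)%:~R : R|)); first lra.
rewrite /p mulr_sumr -sumrB; apply: ler_sum => i _.
by rewrite rmorphM /= mulrA; apply: floor_mul_ge.
Qed.

Lemma near_inv_succ_lt (e : R) : 0 < e -> \forall p \near \oo, (p.+1%:R : R)^-1 < e.
Proof. by move=> e0; apply: (cvgr_lt _ (@cvg_harmonic R) _ e0). Qed.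

Lemma cvgR_unique (u : nat -> R) (a b : R) :
  u t @[t --> \oo] --> a -> u t @[t --> \oo] --> b -> a = b.
Proof. exact: (@cvg_unique R^o (@norm_hausdorff _ R^o) (u @ \oo) _). Qed.

Lemma cvg_sumR (I : Type) (r : seq I) (f : I -> nat -> R) (a : I -> R) :
  (forall i, f i t @[t --> \oo] --> a i) ->
  \sum_(i <- r) f i t @[t --> \oo] --> \sum_(i <- r) a i.
Proof. by move=> h; apply: cvg_big => [|i _]; [exact: (@add_continuous R^o)|exact: h]. Qed.

Lemma cvg_prodR (I : Type) (r : seq I) (f : I -> nat -> R) (a : I -> R) :
  (forall i, f i t @[t --> \oo] --> a i) ->
  \prod_(i <- r) f i t @[t --> \oo] --> \prod_(i <- r) a i.
Proof. by move=> h; apply: cvg_big => [|i _]; [exact: (@mul_continuous R)|exact: h]. Qed.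

Lemma cvg_exprnR (u : nat -> R) (a : R) e :
  u t @[t --> \oo] --> a -> u t ^+ e @[t --> \oo] --> a ^+ e.
Proof. exact: (@continuous_cvg _ R^o R^o _ _ u (fun z => z ^+ e) a (@exprn_continuous R e a)). Qed.

Definition dist1 (s : nat) (u v : 'I_s -> R) : R := \sum_m `|u m - v m|.

Lemma dist1_coord s (u v : 'I_s -> R) l : `|u l - v l| <= dist1 u v.
Proof. by rewrite /dist1 (bigD1 l) //= lerDl; apply: sumr_ge0. Qed.

Lemma cvg_dist1 s (u : nat -> 'I_s -> R) (v w : 'I_s -> R) :
  (forall l, u t l @[t --> \oo] --> v l) -> dist1 (u t) w @[t --> \oo] --> dist1 v w.
Proof.
move=> hu; apply: cvg_sumR => m; apply: (@cvg_norm _ R^o).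
by apply: (@cvgB _ R^o) => //; exact: cvg_cst.
Qed.

Lemma sequentially_continuous_ball s (G : ('I_s -> R) -> R) (z : 'I_s -> R) :
  (forall u : nat -> 'I_s -> R, (forall l, u t l @[t --> \oo] --> z l) ->
     G (u t) @[t --> \oo] --> G z) ->
  forall e, 0 < e -> exists2 r, 0 < r &
    forall w, dist1 w z < r -> `|G w - G z| < e.
Proof.
move=> hG e e0; apply: NNPP => noball.
have hw p : exists w, dist1 w z < (p.+1%:R)^-1 /\ e <= `|G w - G z|.
  apply: NNPP => nw; apply: noball; exists (p.+1%:R)^-1 => // w hw.
  by rewrite ltNge; apply/negP => hge; apply: nw; exists w.
have [u hu] := boolp.choice hw.
have ucv l : u t l @[t --> \oo] --> z l.
  apply/(@cvgrPdist_lt _ R^o) => eps eps0; apply: filterS (near_inv_succ_lt eps0) => p hp.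
  by rewrite distrC; exact: le_lt_trans (dist1_coord (u p) z l) (lt_trans (hu p).1 hp).
have [p hp] := filter_ex ((@cvgrPdist_lt _ R^o _ _ _ _ _).1 (hG u ucv) e e0).
by move: (hu p).2; rewrite distrC leNgt hp.
Qed.

Lemma MVT_gt0 (f df : R -> R) a b : 0 < a -> a < b ->
  (forall u : R, 0 < u -> is_derive (u : R^o) (1 : R^o) (f : R^o -> R^o) (df u)) ->
  exists2 c, c \in `]a, b[ & f b - f a = df c * (b - a).
Proof.
move=> a0 ab hd; apply: MVT => //.
  by move=> c; rewrite in_itv /= => /andP[ac _]; apply: hd; exact: lt_trans ac.
apply: derivable_within_continuous => c; rewrite in_itv /= => /andP[ac _].
exact: (@ex_derive _ _ _ _ _ _ _ (hd c (lt_le_trans a0 ac))).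
Qed.

Lemma last_time_ge (g : R -> R) (r a b t : R) : 0 < a ->
  (forall u, 0 < u -> {for u, continuous (g : R^o -> R^o)}) ->
  a <= t -> t <= b -> r <= g t ->
  exists ts, [/\ t <= ts, ts <= b, r <= g ts & forall u, ts < u -> u <= b -> g u < r].
Proof.
move=> a0 gcont a_t t_b rgt.
pose A := [set u | [/\ a <= u, u <= b & r <= g u]].
have hA : has_sup A by split; [exists t|exists b => u []].
pose ts := sup A.
have t_ts : t <= ts by apply: sup_upper_bound.
have ts_b : ts <= b by apply: ge_sup; [exists t|move=> u []].
have hw p : exists u, A u /\ ts - (p.+1%:R)^-1 < u.
  have p0 : 0 < (p.+1%:R : R)^-1 by rewrite invr_gt0.
  by have [u Au hu] := sup_adherent p0 hA; exists u.
have [su hsu] := boolp.choice hw.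
have su_cv : su p @[p --> \oo] --> ts.
  apply/(@cvgrPdist_lt _ R^o) => eps eps0; apply: filterS (near_inv_succ_lt eps0) => p hp.
  have su_ts : su p <= ts by apply: sup_upper_bound => //; exact: (hsu p).1.
  rewrite ger0_norm ?subr_ge0 //; apply: lt_trans hp.
  by rewrite ltrBlDr addrC -ltrBlDr; exact: (hsu p).2.
exists ts; split=> // [|u tsu ub].
  have gcv : g (su p) @[p --> \oo] --> g ts.
    by apply: (cvg_comp su g su_cv); apply: gcont; apply: lt_le_trans a0 (le_trans a_t t_ts).
  rewrite leNgt; apply/negP => /(cvgr_lt _ gcv) /filter_ex [p gp].
  by case: (hsu p) => -[_ _ rg] _; move: gp; rewrite ltNge rg.
rewrite ltNge; apply/negP => rgu.
have Au : A u by split=> //; apply: le_trans a_t (le_trans t_ts (ltW tsu)).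
by have := sup_upper_bound hA Au; rewrite leNgt tsu.
Qed.

Section MassActionAnalysis.
Variables (s n : nat) (E : rel 'I_n) (Y : 'I_n -> monomial s) (k : 'I_n -> 'I_n -> R).
Local Notation F z l := (mass_action_rhs E Y k z 0 l).

Lemma mass_action_rhs_cvg (u : nat -> 'I_s -> R) z l :
  (forall m, u t m @[t --> \oo] --> z m) -> F (u t) l @[t --> \oo] --> F z l.
Proof.
move=> hu; rewrite mass_action_rhsE; under eq_cvg do rewrite mass_action_rhsE.
apply: cvg_sumR => i; apply: cvg_sumR => j.
apply: cvgM; last exact: cvg_cst.
apply: cvgM; last exact: cvg_cst.
by apply: cvg_prodR => m; apply: cvg_exprnR.
Qed.

Lemma mass_action_rhs_near z l0 : 0 < F z l0 -> exists2 r, 0 < r &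
  forall w, dist1 w z < r -> F z l0 / 2 < F w l0 /\ forall m, `|F w m| <= \sum_m `|F z m| + 1.
Proof.
move=> Fz; pose G w := dist1 (fun m => F w m) (fun m => F z m).
have Gcv u : (forall l, u t l @[t --> \oo] --> z l) -> G (u t) @[t --> \oo] --> G z.
  by move=> hu; apply: cvg_dist1 => m; apply: mass_action_rhs_cvg.
have e0 : 0 < Num.min (F z l0 / 2) 1 by rewrite lt_min ltr01 andbT divr_gt0.
have [r r0 hr] := sequentially_continuous_ball Gcv e0.
exists r => // w /hr; have -> : G z = 0 by rewrite /G /dist1 big1 // => m _; rewrite subrr normr0.
rewrite subr0 ger0_norm ?sumr_ge0 // lt_min => /andP[Gw_half Gw1].
have Fl0 := dist1_coord (fun m => F w m) (fun m => F z m) l0.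
split; first by move: Fl0; rewrite -/(G w) ler_norml => /andP[+ _]; lra.
move=> m; have Fm := dist1_coord (fun m => F w m) (fun m => F z m) m.
have Fzm : `|F z m| <= \sum_m `|F z m| by rewrite (bigD1 m) //= lerDl sumr_ge0.
have := ler_normD (F z m) (F w m - F z m); rewrite addrC subrK.
move: Fm; rewrite -/(G w); lra.
Qed.

Hypothesis hk : forall i j, E i j -> 0 < k i j.

(* A term with [Y i l0 > 0] vanishes since [z l0 = 0], the others are
   nonnegative, and the edge [i0 -> j0] contributes a positive one. *)
Lemma mass_action_rhs_gt0 (z : 'I_s -> R) i0 j0 l0 : (forall l, 0 <= z l) -> E i0 j0 ->
  vanish_on (fun m => z m = 0) (Y i0) -> z l0 = 0 -> (0 < Y j0 l0)%N -> 0 < F z l0.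
Proof.
move=> z_ge0 Eij0 Yi0 zl0 Yj0; rewrite mass_action_rhsE.
set T := fun i j => psi Y z i * edge_rate E k i j * ((Y j l0)%:R - (Y i l0)%:R).
have psi_ge0 i : 0 <= psi Y z i by apply: prodr_ge0 => l _; apply: exprn_ge0.
have T_ge0 i j : 0 <= T i j.
  have [Yil0|Yil0] := eqVneq (Y i l0) 0%N.
    by rewrite /T Yil0 subr0; do 2 apply: mulr_ge0 => //; exact: edge_rate_ge0.
  by rewrite /T /psi (bigD1 l0) //= zl0 expr0n (negbTE Yil0) !mul0r.
have Yi0l0 : Y i0 l0 = 0%N by exact: Yi0.
have ij0 : i0 != j0 by apply: contraTneq Yj0 => <-; rewrite Yi0l0.
have T_gt0 : 0 < T i0 j0.
  rewrite /T Yi0l0 subr0; apply: mulr_gt0; last by rewrite ltr0n.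
  apply: mulr_gt0.
    apply: prodr_gt0 => m _; have [zm0|zm0] := eqVneq (z m) 0; first by rewrite Yi0 ?expr0.
    by apply: exprn_gt0; rewrite lt_neqAle eq_sym zm0 z_ge0.
  by rewrite /edge_rate (negbTE ij0) /offdiag Eij0 hk.
rewrite (bigD1 i0) //= (bigD1 j0) //= -/(T i0 j0); apply: (lt_le_trans T_gt0).
rewrite -addrA lerDl; apply: addr_ge0; first by apply: sumr_ge0 => j _; apply: T_ge0.
by apply: sumr_ge0 => i _; apply: sumr_ge0 => j _; apply: T_ge0.
Qed.

End MassActionAnalysis.

Section Solution.
Variables (s n : nat) (E : rel 'I_n) (Y : 'I_n -> monomial s) (k : 'I_n -> 'I_n -> R).
Local Notation F z l := (mass_action_rhs E Y k z 0 l).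
Variable x : R -> 'I_s -> R.
Hypothesis hsol : is_solution E Y k x.

Lemma solution_continuous t l : 0 < t -> {for t, continuous (fun u : R^o => x u l : R^o)}.
Proof.
move=> t0; apply/differentiable_continuous; rewrite -derivable1_diffP.
exact: (@ex_derive _ _ _ _ _ _ _ (hsol t0 l)).
Qed.

Lemma solution_MVT a b l : 0 < a -> a < b ->
  exists2 c, c \in `]a, b[ & x b l - x a l = F (x c) l * (b - a).
Proof.
by move=> a0 ab; apply: (@MVT_gt0 (fun u => x u l) (fun u => F (x u) l)) => // u u0; apply: hsol.
Qed.

Lemma solution_conserved (c : 'I_s -> R) : (forall z, \sum_m c m * F z m = 0) ->
  forall a b, 0 < a -> 0 < b -> \sum_m c m * x a m = \sum_m c m * x b m.
Proof.
move=> hc; have g_derive t : 0 < t -> is_derive (t : R^o) (1 : R^o)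
    (fun u : R^o => \sum_m c m * x u m : R^o) (\sum_m c m * F (x t) m).
  move=> t0; have -> : (fun u : R^o => \sum_m c m * x u m : R^o) =
      \sum_(m < s) (c m \*: (fun u : R^o => x u m : R^o)).
    by apply: funext => u; rewrite fct_sumE.
  exact: (is_derive_sum (fun m => is_deriveZ (c m) (hsol t0 m))).
move=> a b; wlog ab : a b / a < b.
  move=> W a0 b0; have [ab|ba|->] := ltgtP a b; [exact: W|exact/esym/W|by []].
move=> a0 _; have [t _] := MVT_gt0 a0 ab g_derive.
by rewrite hc mul0r => /eqP; rewrite subr_eq0 => /eqP.
Qed.

(* The displacement [x 1 - y] lies in the stoichiometric space: the cokernel of
   [Ak *m Ymx] consists of conservation laws. *)
Lemma omega_limit_stoichiometric (tm : nat -> R) (y : 'I_s -> R) :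
  tm m @[m --> \oo] --> +oo -> (forall l, x (tm m) l @[m --> \oo] --> y l) ->
  exists c : 'rV_n, \row_l (x 1 l - y l) = c *m (Ak E k *m Ymx Y).
Proof.
move=> htm hy; set M := Ak E k *m Ymx Y; set C := cokermx M.
have conservation j z : \sum_m C m j * F z m = 0.
  transitivity ((mass_action_rhs E Y k z *m C) 0 j).
    by rewrite mxE; apply: eq_bigr => m _; rewrite mulrC.
  by rewrite /mass_action_rhs -(mulmxA _ (Ak E k)) -/M -mulmxA mulmx_coker mulmx0 mxE.
have hlim j : \sum_m C m j * x 1 m = \sum_m C m j * y m.
  apply: (@cvgR_unique (fun p => \sum_m C m j * x (tm p) m)).
    apply: cvg_near_cst; move/cvgryPgt: htm => /(_ 0); apply: filterS => p tp.
    exact: solution_conserved.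
  by apply: cvg_sumR => m; apply: cvgM => //; exact: cvg_cst.
suff /submxP : (\row_l (x 1 l - y l) <= M)%MS by [].
rewrite submxE; apply/eqP/matrixP => i j; rewrite !mxE.
under eq_bigr do rewrite mxE mulrBl [_ * C _ _]mulrC [y _ * _]mulrC.
by rewrite sumrB hlim subrr.
Qed.

Lemma solution_stays_near (y : 'I_s -> R) (r V a b : R) : 0 < r -> 0 <= V -> 0 < a -> a <= b ->
  (forall t, 0 < t -> dist1 (x t) y < r -> forall m, `|F (x t) m| <= V) ->
  dist1 (x b) y < r / 2 -> s%:R * V * (b - a) <= r / 4 ->
  forall t, a <= t -> t <= b -> dist1 (x t) y < r.
Proof.
move=> r0 V0 a0 ab hV hb hsmall t a_t t_b; rewrite ltNge; apply/negP => rt.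
have dist_cont u : 0 < u -> {for u, continuous (fun v : R^o => dist1 (x v) y : R^o)}.
  move=> u0; apply: (cvg_big (@add_continuous R^o)) => m _.
  by apply: (@cvg_norm _ R^o); apply: cvgB; [exact: solution_continuous|exact: cvg_cst].
have [ts [t_ts ts_b r_ts after_ts]] := last_time_ge a0 dist_cont a_t t_b rt.
have ts_lt_b : ts < b by rewrite lt_neqAle ts_b andbT; apply: contraTneq r_ts => ->; lra.
have ts0 : 0 < ts by apply: lt_le_trans a0 (le_trans a_t t_ts).
have step m : `|x b m - x ts m| <= V * (b - a).
  have [c /[!in_itv] /andP[ts_c c_b] ->] := solution_MVT m ts0 ts_lt_b.
  rewrite normrM (@ger0_norm _ (b - ts)) ?subr_ge0 ?(ltW ts_lt_b) //.
  apply: ler_pM => //; first by rewrite subr_ge0 ltW.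
    by apply: hV; [exact: lt_trans ts0 ts_c|exact: after_ts (ltW c_b)].
  by rewrite lerD2l lerN2 (le_trans a_t).
have : dist1 (x ts) y <= dist1 (x b) y + s%:R * (V * (b - a)).
  have -> : s%:R * (V * (b - a)) = \sum_(m < s) (V * (b - a)).
    by rewrite sumr_const card_ord mulr_natl.
  rewrite /dist1 -big_split /=.
  apply: ler_sum => m _; have := ler_normD (x ts m - x b m) (x b m - y m).
  by rewrite addrA subrK (distrC (x ts m) (x b m)); have := step m; lra.
lra.
Qed.

End Solution.

Section OmegaLimit.
Variables (s n : nat) (E : rel 'I_n) (Y : 'I_n -> monomial s) (k : 'I_n -> 'I_n -> R).
Local Notation F z l := (mass_action_rhs E Y k z 0 l).
Hypothesis hk : forall i j, E i j -> 0 < k i j.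
Variable x : R -> 'I_s -> R.
Hypothesis hsol : is_solution E Y k x.
Hypothesis hpos : forall t, 0 <= t -> forall l, 0 < x t l.
Variables (tm : nat -> R) (y : 'I_s -> R).
Hypothesis htm : tm m @[m --> \oo] --> +oo.
Hypothesis hy : forall l, x (tm m) l @[m --> \oo] --> y l.
Hypothesis y_ge0 : forall l, 0 <= y l.

(* Near [y], [x l0] grows at rate at least [c > 0]; on a window of fixed length
   [tau] ending at [tm m] the solution stays near [y], contradicting
   [x (tm m) l0 -> 0]. *)
Lemma omega_limit_siphon : siphon E Y (fun m => y m = 0).
Proof.
move=> i j Eij Yi l0 yl0; apply/eqP; rewrite -leqn0 leqNgt; apply/negP => Yjl0.
have Fy := mass_action_rhs_gt0 hk y_ge0 Eij Yi yl0 Yjl0.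
have [r r0 near_y] := mass_action_rhs_near Fy.
set c := F y l0 / 2; set V := \sum_m `|F y m| + 1.
have c0 : 0 < c by rewrite divr_gt0.
have V0 : 0 < V by rewrite ltr_wpDl // sumr_ge0.
have s0 : 0 < s%:R :> R by rewrite ltr0n (leq_ltn_trans (leq0n l0)).
pose tau := r / (4 * (s%:R * V)).
have tau0 : 0 < tau by rewrite divr_gt0 // !mulr_gt0.
have dist_cv : dist1 (x (tm m)) y @[m --> \oo] --> (0 : R).
  by have := cvg_dist1 (w := y) hy; rewrite /dist1 big1 // => m _; rewrite subrr normr0.
have r2 : 0 < r / 2 by rewrite divr_gt0.
have ctau : y l0 < c * tau by rewrite yl0 mulr_gt0.
have [m [[tm_gt close] x_small]] := filter_ex (filterI
  (filterI ((cvgryPgt _).1 htm tau) (cvgr_lt _ dist_cv _ r2)) (cvgr_lt _ (@hy l0) _ ctau)).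
set b := tm m in tm_gt close x_small; pose a := b - tau.
have eba : b - a = tau by rewrite /a opprB addrC subrK.
have a0 : 0 < a by rewrite subr_gt0.
have ab : a < b by rewrite -subr_gt0 eba.
have hV t : 0 < t -> dist1 (x t) y < r -> forall m, `|F (x t) m| <= V.
  by move=> _ /near_y [].
have small : s%:R * V * (b - a) <= r / 4.
  by rewrite eba /tau le_eqVlt; apply/orP; left; apply/eqP; field; rewrite !gt_eqF.
have stay := solution_stays_near hsol r0 (ltW V0) a0 (ltW ab) hV close small.
have [xi /[!in_itv] /andP[a_xi xi_b]] := solution_MVT hsol l0 a0 ab.
have c_F : c < F (x xi) l0 by apply: (near_y _ (stay _ (ltW a_xi) (ltW xi_b))).1.
have : c * tau < F (x xi) l0 * tau by rewrite ltr_pM2r.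
have := hpos (ltW a0) l0; rewrite eba; move: x_small; lra.
Qed.

End OmegaLimit.

Theorem corollary4p2 (s n : nat) (hs : (0 < s)%N) (hn : (0 < n)%N)
  (E : rel 'I_n) (Y : 'I_n -> monomial s) (hY : injective Y) :
  weakly_reversible E -> ~ catalytic E Y -> persistent E Y.
Proof.
move=> WR ncat k hk x hsol hpos [y [[tm [_ [htm hy]]] [y_ge0 [l0 yl0]]]].
have siph := omega_limit_siphon hk hsol hpos htm hy y_ge0.
have [c hc] := omega_limit_stoichiometric hsol htm hy.
pose a (p : 'I_n * 'I_n) := c 0 p.1 * edge_rate E k p.1 p.2.
pose d (p : 'I_n * 'I_n) l := (Y p.2 l)%:Z - (Y p.1 l)%:Z.
have apos l : y l = 0 -> 0 < \sum_p a p * (d p l)%:~R.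
  have <- : (c *m (Ak E k *m Ymx Y)) 0 l = \sum_p a p * (d p l)%:~R.
    rewrite mulmxA mulmx_AkY pair_bigA; apply: eq_bigr => p _.
    by rewrite /a /d rmorphB.
  by move=> yl; rewrite -hc mxE yl subr0; apply: hpos.
have [z [z_supp zpos]] := positive_int_combination apos.
apply: (noncatalytic_siphon_difference ncat siph yl0 _ zpos).
apply: event_difference_edge_combination WR _ => p; apply: contraNT => nE.
by apply/eqP; rewrite z_supp // /a edge_rate_eq0 ?mulr0.
Qed.
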